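(* Let $X$ be a real Hilbert space, let $A$ be a closed linear subspace of $X$, let $C$ be a nonempty closed convex subset of $A$, and let $(x_n)_{n\in\mathbb{N}}$ be a sequence in $X$. Suppose that $(x_n)_{n\in\mathbb{N}}$ is Fejér monotone with respect to $C$, i.e., for all $n\in\mathbb{N}$ and all $c\in C$, $\|x_{n+1}-c\|\le\|x_n-c\|$, and suppose that every weak cluster point of $(P_A x_n)_{n\in\mathbb{N}}$ lies in $C$. Then $(P_A x_n)_{n\in\mathbb{N}}$ converges weakly to some point in $C$.
   Context: $P_A$ denotes the orthogonal (metric) projection onto the closed convex set $A$. *)

From Stdlib Require Import Reals Lra Classical ClassicalEpsilon.
Open Scope R_scope.

Record HilbertSpace := {
  hcar :> Type;
  hzero : hcar;
  hadd : hcar -> hcar -> hcar;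
  hopp : hcar -> hcar;
  hscal : R -> hcar -> hcar;
  hinner : hcar -> hcar -> R;
  hadd_assoc : forall x y z, hadd x (hadd y z) = hadd (hadd x y) z;
  hadd_comm : forall x y, hadd x y = hadd y x;
  hadd_0 : forall x, hadd hzero x = x;
  hadd_opp : forall x, hadd x (hopp x) = hzero;
  hscal_assoc : forall a b x, hscal a (hscal b x) = hscal (a * b) x;
  hscal_1 : forall x, hscal 1 x = x;
  hscal_distr_l : forall a x y, hscal a (hadd x y) = hadd (hscal a x) (hscal a y);
  hscal_distr_r : forall a b x, hscal (a + b) x = hadd (hscal a x) (hscal b x);
  hinner_sym : forall x y, hinner x y = hinner y x;
  hinner_add_l : forall x y z, hinner (hadd x y) z = hinner x z + hinner y z;
  hinner_scal_l : forall a x y, hinner (hscal a x) y = a * hinner x y;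
  hinner_pos : forall x, 0 <= hinner x x;
  hinner_def : forall x, hinner x x = 0 -> x = hzero;
  hcomplete : forall u : nat -> hcar,
    (forall eps, eps > 0 -> exists N : nat, forall m n : nat, (m >= N)%nat -> (n >= N)%nat ->
        sqrt (hinner (hadd (u m) (hopp (u n))) (hadd (u m) (hopp (u n)))) < eps) ->
    exists l, Un_cv (fun n => sqrt (hinner (hadd (u n) (hopp l)) (hadd (u n) (hopp l)))) 0
}.

Section Defs.
Context {X : HilbertSpace}.

Definition hsub (x y : X) : X := hadd X x (hopp X y).
Definition hnorm (x : X) : R := sqrt (hinner X x x).

Definition converges (u : nat -> X) (l : X) : Prop :=
  Un_cv (fun n => hnorm (hsub (u n) l)) 0.

Definition weakly_converges (u : nat -> X) (l : X) : Prop :=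
  forall z : X, Un_cv (fun n => hinner X (u n) z) (hinner X l z).

Definition weak_cluster_point (u : nat -> X) (y : X) : Prop :=
  exists phi : nat -> nat, (forall n, (phi n < phi (S n))%nat) /\
    weakly_converges (fun n => u (phi n)) y.

Definition hclosed (S : X -> Prop) : Prop :=
  forall (u : nat -> X) (l : X), (forall n, S (u n)) -> converges u l -> S l.

Definition linear_subspace (A : X -> Prop) : Prop :=
  A (hzero X) /\ (forall x y, A x -> A y -> A (hadd X x y)) /\
  (forall a x, A x -> A (hscal X a x)).

Definition hconvex (C : X -> Prop) : Prop :=
  forall x y t, C x -> C y -> 0 <= t <= 1 ->
    C (hadd X (hscal X t x) (hscal X (1 - t) y)).

Definition is_proj (A : X -> Prop) (x p : X) : Prop :=
  A p /\ forall a, A a -> hnorm (hsub x p) <= hnorm (hsub x a).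

(* the metric projection P_A x (well-defined, i.e. the unique nearest point,
   when A is a nonempty closed convex set; chosen by Hilbert's epsilon) *)
Definition proj (A : X -> Prop) (x : X) : X :=
  epsilon (inhabits (hzero X)) (is_proj A x).

Definition fejer_monotone (u : nat -> X) (C : X -> Prop) : Prop :=
  forall (n : nat) (c : X), C c -> hnorm (hsub (u (S n)) c) <= hnorm (hsub (u n) c).

End Defs.

(* Fejer monotonicity makes [|x n - c|] nonincreasing, hence convergent, for
   every [c] in [C]; expanding the squares, [<x n, c1 - c2>] converges for all
   [c1, c2] in [C], and since [c1 - c2] lies in [A] it equals
   [<P_A x n, c1 - c2>].  Two weak cluster points [y1, y2] of the bounded
   sequence [P_A x n] lie in [C], so this limit is both [<y1, y1 - y2>] and
   [<y2, y1 - y2>], whence [y1 = y2]; and a bounded sequence with a single weak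
   cluster point converges weakly to it.  The Riesz representation theorem,
   obtained by minimizing [|y|^2 - 2 g y] over a closed subspace, provides both
   [P_A] and weak limits, and bounded sequences have weakly convergent
   subsequences by a diagonal argument. *)

From Stdlib Require Import Reals Lra Lia Classical ClassicalEpsilon.
Open Scope R_scope.

Section InnerProduct.
Context {X : HilbertSpace}.
Local Notation ip := (hinner X).

Lemma hinner_addr (x y z : X) : ip x (hadd X y z) = ip x y + ip x z.
Proof. rewrite !(hinner_sym X x), hinner_add_l; reflexivity. Qed.

Lemma hinner_scalr a (x y : X) : ip x (hscal X a y) = a * ip x y.
Proof. rewrite !(hinner_sym X x), hinner_scal_l; reflexivity. Qed.

Lemma hinner_zerol (y : X) : ip (hzero X) y = 0.
Proof.
  assert (H := hinner_add_l X (hzero X) (hzero X) y).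
  rewrite hadd_0 in H. lra.
Qed.

Lemma hinner_zeror (y : X) : ip y (hzero X) = 0.
Proof. rewrite hinner_sym; apply hinner_zerol. Qed.

Lemma hinner_oppl (x y : X) : ip (hopp X x) y = - ip x y.
Proof.
  assert (H := hinner_add_l X x (hopp X x) y).
  rewrite hadd_opp, hinner_zerol in H. lra.
Qed.

Lemma hinner_oppr (x y : X) : ip y (hopp X x) = - ip y x.
Proof. rewrite !(hinner_sym X y); apply hinner_oppl. Qed.

Lemma hinner_subl (x y z : X) : ip (hsub x y) z = ip x z - ip y z.
Proof. unfold hsub; rewrite hinner_add_l, hinner_oppl; ring. Qed.

Lemma hinner_subr (x y z : X) : ip z (hsub x y) = ip z x - ip z y.
Proof. unfold hsub; rewrite hinner_addr, hinner_oppr; ring. Qed.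

End InnerProduct.

Ltac hinner_expand :=
  repeat rewrite ?hinner_add_l, ?hinner_addr, ?hinner_scal_l, ?hinner_scalr,
    ?hinner_zerol, ?hinner_zeror, ?hinner_oppl, ?hinner_oppr,
    ?hinner_subl, ?hinner_subr.

Ltac hinner_expand_in H :=
  repeat rewrite ?hinner_add_l, ?hinner_addr, ?hinner_scal_l, ?hinner_scalr,
    ?hinner_zerol, ?hinner_zeror, ?hinner_oppl, ?hinner_oppr,
    ?hinner_subl, ?hinner_subr in H.

Section Norm.
Context {X : HilbertSpace}.
Local Notation ip := (hinner X).
Local Notation sq x := (hinner X x x).

Lemma hsub_sq_eq0 (a b : X) : sq (hsub a b) = 0 -> a = b.
Proof.
  intro H. apply hinner_def in H. unfold hsub in H.
  assert (E : hadd X (hadd X a (hopp X b)) b = b) by (rewrite H, hadd_0; reflexivity).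
  rewrite <- hadd_assoc, (hadd_comm X (hopp X b)), hadd_opp, hadd_comm, hadd_0 in E.
  exact E.
Qed.

Lemma hopp_scal (x : X) : hopp X x = hscal X (-1) x.
Proof. apply hsub_sq_eq0. unfold hsub. hinner_expand. ring. Qed.

Lemma hnorm_ge0 (x : X) : 0 <= hnorm x.
Proof. apply sqrt_pos. Qed.

Lemma hnorm_sq (x : X) : hnorm x * hnorm x = sq x.
Proof. apply sqrt_sqrt, hinner_pos. Qed.

Lemma hnorm_le (a b : X) : hnorm a <= hnorm b <-> sq a <= sq b.
Proof.
  split; intro H.
  - rewrite <- !hnorm_sq. pose proof (hnorm_ge0 a). nra.
  - apply sqrt_le_1_alt, H.
Qed.

Lemma hnorm_sub_sym (a b : X) : hnorm (hsub a b) = hnorm (hsub b a).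
Proof. unfold hnorm. f_equal. hinner_expand. rewrite (hinner_sym X a b). ring. Qed.

Lemma hinner_sq_le (a b : X) : ip a b * ip a b <= sq a * sq b.
Proof.
  destruct (Req_dec (sq b) 0) as [Hb | Hb].
  - apply hinner_def in Hb. rewrite Hb, !hinner_zeror. lra.
  - assert (Hpos : 0 < sq b) by (pose proof (hinner_pos X b); lra).
    (* expand 0 <= |a + t b|^2 at the minimizing t = - <a,b> / |b|^2 *)
    set (t := - ip a b / sq b).
    pose proof (hinner_pos X (hadd X a (hscal X t b))) as H.
    hinner_expand_in H. rewrite (hinner_sym X b a) in H.
    assert (Ht : t * sq b = - ip a b) by (unfold t; field; lra).
    assert (Hscaled : 0 <= sq a * sq b + 2 * (t * sq b) * ip a b + (t * sq b) * (t * sq b))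
      by nra.
    rewrite Ht in Hscaled. nra.
Qed.

Lemma Rabs_hinner_le (a b : X) : Rabs (ip a b) <= hnorm a * hnorm b.
Proof.
  rewrite <- (Rabs_pos_eq (hnorm a * hnorm b))
    by (apply Rmult_le_pos; apply hnorm_ge0).
  apply Rsqr_le_abs_0. rewrite Rsqr_mult. unfold Rsqr. rewrite !hnorm_sq.
  apply hinner_sq_le.
Qed.

Lemma hnorm_triangle (a b : X) : hnorm (hadd X a b) <= hnorm a + hnorm b.
Proof.
  pose proof (hnorm_ge0 a). pose proof (hnorm_ge0 b).
  apply Rsqr_incr_0_var; [| lra].
  unfold Rsqr. rewrite hnorm_sq. hinner_expand. rewrite (hinner_sym X b a).
  pose proof (Rabs_hinner_le a b). pose proof (Rle_abs (ip a b)).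
  rewrite <- (hnorm_sq a), <- (hnorm_sq b). nra.
Qed.

Lemma hnorm_le_add_sub (a c : X) : hnorm a <= hnorm (hsub a c) + hnorm c.
Proof.
  replace a with (hadd X (hsub a c) c) at 1 by (apply hsub_sq_eq0; hinner_expand; ring).
  apply hnorm_triangle.
Qed.

Lemma linear_subspace_sub (K : X -> Prop) (a b : X) :
  linear_subspace K -> K a -> K b -> K (hsub a b).
Proof.
  intros [_ [Kadd Kscal]] Ka Kb. unfold hsub. rewrite hopp_scal. auto.
Qed.

Lemma converges_of_sq_dist_le (u : nat -> X) (e : nat -> R) :
  Un_cv e 0 ->
  (forall p q, sq (hsub (u p) (u q)) <= e p + e q) ->
  exists l, converges u l.
Proof.
  intros He Hu. apply hcomplete. intros eps Heps.
  destruct (He (eps * eps / 2)) as [N0 HN0]; [nra |].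
  exists N0. intros p q Hp Hq.
  specialize (HN0 p Hp) as Ep. specialize (HN0 q Hq) as Eq.
  unfold Rdist in Ep, Eq. rewrite Rminus_0_r in Ep, Eq.
  pose proof (Rle_abs (e p)). pose proof (Rle_abs (e q)).
  change (hnorm (hsub (u p) (u q)) < eps).
  unfold hnorm. rewrite <- (sqrt_square eps) by lra.
  apply sqrt_lt_1_alt. split; [apply hinner_pos |]. specialize (Hu p q). lra.
Qed.

End Norm.

Lemma Un_cv_const (c : R) : Un_cv (fun _ => c) c.
Proof.
  intros eps Heps. exists 0%nat. intros.
  unfold Rdist. rewrite Rminus_diag, Rabs_R0. exact Heps.
Qed.

Lemma Un_cv_le_ub (u : nat -> R) (l b : R) :
  (forall n, u n <= b) -> Un_cv u l -> l <= b.
Proof.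
  intros Hb Hl. apply Rnot_lt_le. intro Hlt.
  destruct (Hl (l - b)) as [N0 HN]; [lra |].
  specialize (HN N0 (le_n _)). specialize (Hb N0).
  unfold Rdist in HN. pose proof (Rle_abs (l - u N0)).
  rewrite Rabs_minus_sym in HN. lra.
Qed.

Lemma Un_cv_ge_lb (u : nat -> R) (l b : R) :
  (forall n, b <= u n) -> Un_cv u l -> b <= l.
Proof.
  intros Hb Hl. apply Ropp_le_cancel.
  apply (Un_cv_le_ub (fun n => - u n)); [intro n; specialize (Hb n); lra |].
  apply CV_opp, Hl.
Qed.

Lemma Rabs_sub3 (a b c d : R) : Rabs (a - d) <= Rabs (a - b) + Rabs (b - c) + Rabs (c - d).
Proof.
  pose proof (Rabs_triang (a - b) (b - c)) as Habc.
  pose proof (Rabs_triang (a - c) (c - d)) as Hacd.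
  replace (a - b + (b - c)) with (a - c) in Habc by ring.
  replace (a - c + (c - d)) with (a - d) in Hacd by ring.
  lra.
Qed.

Definition strict_incr (f : nat -> nat) : Prop := forall n, (f n < f (S n))%nat.

Lemma strict_incr_lt (f : nat -> nat) :
  strict_incr f -> forall n m, (n < m)%nat -> (f n < f m)%nat.
Proof. intros Hf n m Hnm. induction Hnm; [apply Hf |]. specialize (Hf m). lia. Qed.

Lemma strict_incr_ge_id (f : nat -> nat) : strict_incr f -> forall n, (n <= f n)%nat.
Proof. intros Hf n. induction n; [lia |]. specialize (Hf n). lia. Qed.

Lemma strict_incr_comp (f g : nat -> nat) :
  strict_incr f -> strict_incr g -> strict_incr (fun n => f (g n)).
Proof. intros Hf Hg n. apply strict_incr_lt; auto. Qed.

Lemma Un_cv_subseq (u : nat -> R) (l : R) (f : nat -> nat) :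
  strict_incr f -> Un_cv u l -> Un_cv (fun n => u (f n)) l.
Proof.
  intros Hf Hl eps Heps. destruct (Hl eps Heps) as [N0 HN].
  exists N0. intros n Hn. apply HN. pose proof (strict_incr_ge_id f Hf n). lia.
Qed.

Lemma strict_incr_extract (P : nat -> nat -> Prop) :
  (forall k N0, exists n, (N0 <= n)%nat /\ P k n) ->
  exists f, strict_incr f /\ forall k, P k (f k).
Proof.
  intro H.
  set (next := fun k N0 => epsilon (inhabits 0%nat) (fun n => (N0 <= n)%nat /\ P k n)).
  assert (Hnext : forall k N0, (N0 <= next k N0)%nat /\ P k (next k N0))
    by (intros; apply epsilon_spec, H).
  set (f := fix f k := match k with 0 => next 0%nat 0%nat | S k' => next k (S (f k')) end).
  exists f. split.
  - intro n. simpl. destruct (Hnext (S n) (S (f n))). lia.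
  - intro k. destruct k; apply Hnext.
Qed.

Lemma bounded_cv_subseq (v : nat -> R) (B : R) : (forall n, Rabs (v n) <= B) ->
  exists f l, strict_incr f /\ Un_cv (fun n => v (f n)) l.
Proof.
  intro HB.
  destruct (Bolzano_Weierstrass v (fun c => - B <= c <= B) (compact_P3 (- B) B))
    as [l Hl].
  { intro n. specialize (HB n). pose proof (Rle_abs (v n)).
    pose proof (Rle_abs (- v n)). rewrite Rabs_Ropp in *. lra. }
  destruct (strict_incr_extract (fun k n => Rabs (v n - l) < / (INR k + 1)))
    as [f [Hf Pf]].
  { intros k N0. assert (Hd : 0 < / (INR k + 1)) by apply RinvN_pos.
    destruct (Hl (disc l (mkposreal _ Hd)) N0) as [p [Hp Vp]].
    - exists (mkposreal _ Hd). intros y Hy. exact Hy.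
    - exists p. split; assumption. }
  exists f, l. split; [exact Hf |].
  intros eps Heps. destruct (RinvN_cv Heps) as [K HK]. simpl in HK.
  exists K. intros n Hn. specialize (HK n Hn). specialize (Pf n).
  unfold Rdist in *. rewrite Rminus_0_r, Rabs_pos_eq in HK
    by (left; apply RinvN_pos).
  lra.
Qed.

(* Cantor's diagonal argument: [Phi k] is a subsequence of [Phi k'] for
   k' <= k along which [v 0], ..., [v k] converge. *)
Lemma diagonal_cv_subseq (v : nat -> nat -> R) (B : nat -> R) :
  (forall k n, Rabs (v k n) <= B k) ->
  exists d, strict_incr d /\ forall k, exists l, Un_cv (fun n => v k (d n)) l.
Proof.
  intro HB.
  set (choose_sub := fun w : nat -> R => epsilon (inhabits (fun n : nat => n))
         (fun s => strict_incr s /\ exists l, Un_cv (fun n => w (s n)) l)).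
  assert (Hchoose : forall w b, (forall n, Rabs (w n) <= b) ->
            strict_incr (choose_sub w) /\ exists l, Un_cv (fun n => w (choose_sub w n)) l).
  { intros w b Hw. apply epsilon_spec.
    destruct (bounded_cv_subseq w b Hw) as [f [l [Hf Hl]]]. eauto. }
  set (Phi := fix Phi k := match k with
              | 0 => choose_sub (v 0%nat)
              | S k' => fun m => Phi k' (choose_sub (fun n => v k (Phi k' n)) m)
              end).
  assert (Hstep : forall k, strict_incr (choose_sub (fun n => v (S k) (Phi k n))))
    by (intro k; apply (Hchoose _ (B (S k))); auto).
  assert (HPhi : forall k, strict_incr (Phi k) /\ exists l, Un_cv (fun n => v k (Phi k n)) l).
  { induction k as [| k [IHinc _]].
    - apply (Hchoose _ (B 0%nat)). auto.
    - destruct (Hchoose (fun n => v (S k) (Phi k n)) (B (S k))) as [Hs Hl]; [auto |].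
      simpl. split; [apply strict_incr_comp |]; assumption. }
  assert (Nested : forall k j, (k <= j)%nat ->
            exists t, strict_incr t /\ forall m, Phi j m = Phi k (t m)).
  { intros k j Hkj. induction Hkj as [| j Hkj [t [Ht Et]]].
    - exists (fun m => m). split; [intro n; lia | reflexivity].
    - exists (fun n => t (choose_sub (fun n => v (S j) (Phi j n)) n)).
      split; [apply strict_incr_comp; auto | intro n; apply Et]. }
  exists (fun n => Phi n n). split.
  - intro n. simpl. apply strict_incr_lt; [apply HPhi |].
    pose proof (strict_incr_ge_id _ (Hstep n) (S n)). lia.
  - intro k. destruct (HPhi k) as [_ [l Hl]]. exists l.
    intros eps Heps. destruct (Hl eps Heps) as [N0 HN].
    exists (max k N0). intros n Hn.
    destruct (Nested k n ltac:(lia)) as [t [Ht Et]]. rewrite Et. apply HN.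
    pose proof (strict_incr_ge_id t Ht n). lia.
Qed.

Section Riesz.
Context {X : HilbertSpace}.
Local Notation ip := (hinner X).
Local Notation sq x := (hinner X x x).

Variables (K : X -> Prop) (g : X -> R) (M : R).
Hypothesis K_closed : hclosed K.
Hypothesis K_subspace : linear_subspace K.
Hypothesis g_add : forall a b, K a -> K b -> g (hadd X a b) = g a + g b.
Hypothesis g_scal : forall s a, K a -> g (hscal X s a) = s * g a.
Hypothesis g_bound : forall a, K a -> Rabs (g a) <= M * hnorm a.

(* The representer of [g] is the minimizer over [K] of the energy
   [|y|^2 - 2 g y = |y - y*|^2 - |y*|^2]. *)
Let energy (y : X) : R := sq y - 2 * g y.

Let K_add a b : K a -> K b -> K (hadd X a b).
Proof. apply K_subspace. Qed.

Let K_scal s a : K a -> K (hscal X s a).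
Proof. apply K_subspace. Qed.

Local Hint Resolve K_add K_scal : core.

Let g_sub a b : K a -> K b -> g (hsub a b) = g a - g b.
Proof. intros Ka Kb. unfold hsub. rewrite hopp_scal, g_add, g_scal by auto. ring. Qed.

Let energy_ge y : K y -> - (M * M) <= energy y.
Proof.
  intro Ky. unfold energy. rewrite <- hnorm_sq.
  pose proof (g_bound y Ky). pose proof (Rle_abs (g y)).
  pose proof (Rle_0_sqr (hnorm y - M)). unfold Rsqr in *. nra.
Qed.

Let energy_parallelogram a b : K a -> K b ->
  sq (hsub a b) = 2 * energy a + 2 * energy b - 4 * energy (hscal X (/ 2) (hadd X a b)).
Proof.
  intros Ka Kb. unfold energy. rewrite g_scal, g_add by auto.
  hinner_expand. rewrite (hinner_sym X b a). field.
Qed.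

Let energy_le_shift y z : K y -> K z ->
  energy y <= energy z + 2 * (hnorm y + M) * hnorm (hsub y z).
Proof.
  intros Ky Kz. set (d := hsub y z).
  assert (Kd : K d) by (apply linear_subspace_sub; auto).
  assert (E : energy y = energy z + 2 * ip y d - sq d - 2 * g d).
  { unfold energy, d. rewrite g_sub by auto. hinner_expand.
    rewrite (hinner_sym X z y). ring. }
  pose proof (Rabs_hinner_le y d). pose proof (Rle_abs (ip y d)).
  pose proof (g_bound d Kd). pose proof (Rle_abs (- g d)). rewrite Rabs_Ropp in *.
  pose proof (hinner_pos X d). lra.
Qed.

Let energy_inf : exists m, (forall y, K y -> m <= energy y) /\
  forall eps, 0 < eps -> exists y, K y /\ energy y < m + eps.
Proof.
  destruct (completeness (fun r => exists y, K y /\ r = - energy y)) as [m [Hub Hlub]].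
  - exists (M * M). intros r [y [Ky ->]]. pose proof (energy_ge y Ky). lra.
  - exists (- energy (hzero X)), (hzero X). split; [apply K_subspace | reflexivity].
  - exists (- m). split.
    + intros y Ky. assert (- energy y <= m) by (apply Hub; eauto). lra.
    + intros eps Heps. apply NNPP. intro Hnone.
      assert (m <= m - eps); [| lra].
      apply Hlub. intros r [y [Ky ->]]. apply Rnot_lt_le. intro Hlt.
      apply Hnone. exists y. split; [assumption | lra].
Qed.

Let energy_minimizer : exists y, K y /\ forall v, K v -> energy y <= energy v.
Proof.
  destruct energy_inf as [m [Hlow Happ]].
  set (e n := / (INR n + 1)).
  set (ys n := epsilon (inhabits (hzero X)) (fun y => K y /\ energy y < m + e n)).
  assert (Hys : forall n, K (ys n) /\ energy (ys n) < m + e n).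
  { intro n. apply epsilon_spec, Happ, RinvN_pos. }
  destruct (converges_of_sq_dist_le ys (fun n => 2 * e n)) as [y Hy].
  { replace 0 with (2 * 0) by ring. apply CV_mult; [apply Un_cv_const | exact RinvN_cv]. }
  { intros p q. destruct (Hys p) as [Kp Ep]. destruct (Hys q) as [Kq Eq].
    rewrite energy_parallelogram by auto.
    pose proof (Hlow (hscal X (/ 2) (hadd X (ys p) (ys q))) ltac:(auto)). lra. }
  assert (Ky : K y) by (apply (K_closed ys); [intro n; apply Hys | exact Hy]).
  exists y. split; [exact Ky |]. intros v Kv.
  enough (energy y <= m) by (pose proof (Hlow v Kv); lra).
  apply (Un_cv_ge_lb (fun n => m + e n + 2 * (hnorm y + M) * hnorm (hsub (ys n) y))).
  - intro n. destruct (Hys n) as [Kn En].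
    pose proof (energy_le_shift y (ys n) Ky Kn) as Hshift.
    rewrite hnorm_sub_sym in Hshift. lra.
  - assert (Hlim : Un_cv (fun n => m + e n + 2 * (hnorm y + M) * hnorm (hsub (ys n) y))
                   (m + 0 + 2 * (hnorm y + M) * 0)).
    { apply CV_plus; [apply CV_plus; [apply Un_cv_const | exact RinvN_cv] |].
      apply CV_mult; [apply Un_cv_const | exact Hy]. }
    replace (m + 0 + 2 * (hnorm y + M) * 0) with m in Hlim by ring. exact Hlim.
Qed.

(* First-order condition: [energy (y + s v) = energy y + 2 s c + s^2 |v|^2]
   with [c = <y, v> - g v]; taking [s = - c / (|v|^2 + 1)] forces [c = 0]. *)
Let minimizer_represents y : K y -> (forall v, K v -> energy y <= energy v) ->
  forall v, K v -> ip y v = g v.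
Proof.
  intros Ky Hmin v Kv.
  set (c := ip y v - g v). set (s := - c / (sq v + 1)).
  pose proof (hinner_pos X v).
  pose proof (Hmin (hadd X y (hscal X s v)) ltac:(auto)) as Hle.
  assert (E : energy (hadd X y (hscal X s v)) = energy y + 2 * s * c + s * s * sq v).
  { unfold energy, c. rewrite g_add, g_scal by auto. hinner_expand.
    rewrite (hinner_sym X v y). ring. }
  assert (Hs : s * (sq v + 1) = - c) by (unfold s; field; lra).
  assert (Hscaled : 0 <= (2 * s * c + s * s * sq v) * ((sq v + 1) * (sq v + 1)))
    by (apply Rmult_le_pos; nra).
  replace ((2 * s * c + s * s * sq v) * ((sq v + 1) * (sq v + 1))) with
    (2 * (s * (sq v + 1)) * c * (sq v + 1) + (s * (sq v + 1)) * (s * (sq v + 1)) * sq v)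
    in Hscaled by ring.
  rewrite Hs in Hscaled.
  assert (c = 0) by nra. unfold c in *. lra.
Qed.

Lemma riesz_representation : exists y, K y /\ forall v, K v -> ip y v = g v.
Proof.
  destruct energy_minimizer as [y [Ky Hmin]].
  exists y. split; [exact Ky |]. exact (minimizer_represents y Ky Hmin).
Qed.

End Riesz.

Section Projection.
Context {X : HilbertSpace}.
Local Notation ip := (hinner X).
Local Notation sq x := (hinner X x x).

Lemma hsub_sq_pythagoras (x p a : X) : ip (hsub x p) (hsub p a) = 0 ->
  sq (hsub x a) = sq (hsub x p) + sq (hsub p a).
Proof.
  intro H. hinner_expand. hinner_expand_in H.
  rewrite (hinner_sym X a x), (hinner_sym X p x), (hinner_sym X a p) in *. lra.
Qed.

(* [P_A x] is characterized by [<P_A x, v> = <x, v>] on [A]; Riesz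
   representation of [<x, .>] on [A] provides such a point, which is a nearest
   point and hence the one chosen by [proj]. *)
Lemma proj_spec (A : X -> Prop) (x : X) : hclosed A -> linear_subspace A ->
  A (proj A x) /\ forall v, A v -> ip (proj A x) v = ip x v.
Proof.
  intros A_closed A_subspace.
  assert (orth : forall p a, (forall v, A v -> ip p v = ip x v) -> A p -> A a ->
            ip (hsub x p) (hsub p a) = 0).
  { intros p a Hp Ap Aa. hinner_expand. rewrite (Hp p Ap), (Hp a Aa). ring. }
  destruct (riesz_representation A (ip x) (hnorm x) A_closed A_subspace)
    as [p [Ap Hp]];
    [intros; apply hinner_addr | intros; apply hinner_scalr |
     intros; apply Rabs_hinner_le |].
  assert (p_nearest : is_proj A x p).
  { split; [exact Ap |]. intros a Aa. apply hnorm_le.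
    rewrite (hsub_sq_pythagoras x p a) by auto. pose proof (hinner_pos X (hsub p a)). lra. }
  assert (q_nearest : is_proj A x (proj A x)) by (unfold proj; apply epsilon_spec; eauto).
  destruct q_nearest as [Aq Hq].
  replace (proj A x) with p; [auto |].
  apply hsub_sq_eq0. apply Rle_antisym; [| apply hinner_pos].
  specialize (Hq p Ap). apply hnorm_le in Hq.
  rewrite (hsub_sq_pythagoras x p (proj A x)) in Hq by auto.
  lra.
Qed.

Lemma proj_dist_le (A : X -> Prop) (x a : X) : hclosed A -> linear_subspace A -> A a ->
  hnorm (hsub (proj A x) a) <= hnorm (hsub x a).
Proof.
  intros A_closed A_subspace Aa.
  destruct (proj_spec A x A_closed A_subspace) as [Ap Hp].
  apply hnorm_le. rewrite (hsub_sq_pythagoras x (proj A x) a).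
  - pose proof (hinner_pos X (hsub x (proj A x))). lra.
  - hinner_expand. rewrite (Hp _ Ap), (Hp a Aa). ring.
Qed.

End Projection.

Section WeakCompactness.
Context {X : HilbertSpace}.
Local Notation ip := (hinner X).

Definition weak_cv_at (w : nat -> X) (z : X) : Prop :=
  exists l, Un_cv (fun n => ip (w n) z) l.

Lemma weak_cv_at_subspace (w : nat -> X) : linear_subspace (weak_cv_at w).
Proof.
  split; [| split].
  - exists 0. apply Un_cv_ext with (fun _ => 0); [intro; symmetry; apply hinner_zeror |].
    apply Un_cv_const.
  - intros a b [la Ha] [lb Hb]. exists (la + lb).
    apply Un_cv_ext with (fun n => ip (w n) a + ip (w n) b);
      [intro; symmetry; apply hinner_addr | apply CV_plus; assumption].
  - intros s a [la Ha]. exists (s * la).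
    apply Un_cv_ext with (fun n => s * ip (w n) a);
      [intro; symmetry; apply hinner_scalr | apply CV_mult; [apply Un_cv_const | exact Ha]].
Qed.

Variables (w : nat -> X) (B : R).
Hypothesis w_bounded : forall n, hnorm (w n) <= B.

Lemma Rabs_hinner_bounded_sub n (z z' : X) :
  Rabs (ip (w n) z - ip (w n) z') <= B * hnorm (hsub z z').
Proof.
  rewrite <- hinner_subr. eapply Rle_trans; [apply Rabs_hinner_le |].
  apply Rmult_le_compat_r; [apply hnorm_ge0 | apply w_bounded].
Qed.

Lemma weak_cv_at_closed : hclosed (weak_cv_at w).
Proof.
  intros zs z Hzs Hz.
  assert (B_ge0 : 0 <= B)
    by (pose proof (hnorm_ge0 (w 0%nat)); specialize (w_bounded 0%nat); lra).
  enough (Hc : Cauchy_crit (fun n => ip (w n) z))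
    by (destruct (R_complete _ Hc) as [l Hl]; exists l; exact Hl).
  intros eps Heps.
  set (delta := eps / (4 * (B + 1))).
  assert (Hdelta : 0 < delta) by (apply Rdiv_lt_0_compat; lra).
  assert (B_delta : 2 * (B * delta) < eps / 2).
  { unfold delta. apply Rmult_lt_reg_r with (4 * (B + 1)); [lra |].
    field_simplify; lra. }
  destruct (Hz delta Hdelta) as [j Hj]. specialize (Hj j (le_n _)).
  unfold Rdist in Hj. rewrite Rminus_0_r, Rabs_pos_eq in Hj by apply hnorm_ge0.
  destruct (Hzs j) as [lj Hlj].
  destruct (CV_Cauchy _ (exist _ lj Hlj) (eps / 2)) as [N0 HN0]; [lra |].
  exists N0. intros n m Hn Hm. specialize (HN0 n m Hn Hm). unfold Rdist in *.
  pose proof (Rabs_sub3 (ip (w n) z) (ip (w n) (zs j)) (ip (w m) (zs j)) (ip (w m) z)).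
  pose proof (Rabs_hinner_bounded_sub n z (zs j)) as Hn_close.
  pose proof (Rabs_hinner_bounded_sub m (zs j) z) as Hm_close.
  rewrite hnorm_sub_sym in Hn_close.
  assert (B * hnorm (hsub (zs j) z) <= B * delta) by (apply Rmult_le_compat_l; lra).
  lra.
Qed.

(* [z] splits as [P_W z + (z - P_W z)] with the second part orthogonal to
   every [w n], since [W = weak_cv_at w] is a closed subspace containing the
   sequence. *)
Lemma weak_cv_at_everywhere : (forall k, weak_cv_at w (w k)) -> forall z, weak_cv_at w z.
Proof.
  intros Hw z.
  destruct (proj_spec (weak_cv_at w) z weak_cv_at_closed (weak_cv_at_subspace w))
    as [[l Hl] Hp].
  exists l. apply Un_cv_ext with (fun n => ip (w n) (proj (weak_cv_at w) z)); [| exact Hl].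
  intro n. rewrite !(hinner_sym X (w n)). apply Hp, Hw.
Qed.

Lemma weakly_converges_of_weak_cv_at : (forall z, weak_cv_at w z) ->
  exists y, weakly_converges w y.
Proof.
  intro Hw.
  set (f z := epsilon (inhabits 0) (fun l => Un_cv (fun n => ip (w n) z) l)).
  assert (Hf : forall z, Un_cv (fun n => ip (w n) z) (f z))
    by (intro z; apply epsilon_spec, Hw).
  destruct (riesz_representation (fun _ => True) f B) as [y [_ Hy]].
  - intros u l _ _. exact I.
  - repeat split.
  - intros a b _ _. apply (UL_sequence (fun n => ip (w n) (hadd X a b))); [apply Hf |].
    apply Un_cv_ext with (fun n => ip (w n) a + ip (w n) b);
      [intro; symmetry; apply hinner_addr | apply CV_plus; apply Hf].
  - intros s a _. apply (UL_sequence (fun n => ip (w n) (hscal X s a))); [apply Hf |].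
    apply Un_cv_ext with (fun n => s * ip (w n) a);
      [intro; symmetry; apply hinner_scalr | apply CV_mult; [apply Un_cv_const | apply Hf]].
  - intros a _. apply (Un_cv_le_ub (fun n => Rabs (ip (w n) a))); [| apply cv_cvabs, Hf].
    intro n. eapply Rle_trans; [apply Rabs_hinner_le |].
    apply Rmult_le_compat_r; [apply hnorm_ge0 | apply w_bounded].
  - exists y. intro z. rewrite Hy by exact I. apply Hf.
Qed.

End WeakCompactness.

Lemma weak_compact {X : HilbertSpace} (u : nat -> X) (B : R) :
  (forall n, hnorm (u n) <= B) ->
  exists f y, strict_incr f /\ weakly_converges (fun n => u (f n)) y.
Proof.
  intro HB.
  destruct (diagonal_cv_subseq (fun k n => hinner X (u n) (u k)) (fun k => B * hnorm (u k)))
    as [d [Hd Hdk]].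
  { intros k n. eapply Rle_trans; [apply Rabs_hinner_le |].
    apply Rmult_le_compat_r; [apply hnorm_ge0 | apply HB]. }
  assert (Hw : forall n, hnorm (u (d n)) <= B) by (intro; apply HB).
  destruct (weakly_converges_of_weak_cv_at (fun n => u (d n)) B Hw) as [y Hy].
  { apply (weak_cv_at_everywhere _ B Hw). intro k. apply Hdk. }
  exists d, y. split; assumption.
Qed.

Section ClusterPoints.
Context {X : HilbertSpace}.
Local Notation ip := (hinner X).

Lemma weak_cluster_point_subseq (u : nat -> X) (f : nat -> nat) (y : X) :
  strict_incr f -> weak_cluster_point (fun n => u (f n)) y -> weak_cluster_point u y.
Proof.
  intros Hf [phi [Hphi Hy]]. exists (fun n => f (phi n)).
  split; [apply strict_incr_comp |]; assumption.
Qed.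

Lemma weak_cluster_point_eq (u : nat -> X) (y1 y2 : X) :
  weak_cluster_point u y1 -> weak_cluster_point u y2 ->
  (exists L, Un_cv (fun n => ip (u n) (hsub y1 y2)) L) -> y1 = y2.
Proof.
  intros [f1 [Hf1 Hy1]] [f2 [Hf2 Hy2]] [L HL].
  assert (L1 : L = ip y1 (hsub y1 y2))
    by (apply (UL_sequence (fun n => ip (u (f1 n)) (hsub y1 y2)));
        [apply (Un_cv_subseq (fun n => ip (u n) _)); assumption | apply Hy1]).
  assert (L2 : L = ip y2 (hsub y1 y2))
    by (apply (UL_sequence (fun n => ip (u (f2 n)) (hsub y1 y2)));
        [apply (Un_cv_subseq (fun n => ip (u n) _)); assumption | apply Hy2]).
  apply hsub_sq_eq0. rewrite hinner_subl, <- L1, <- L2. ring.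
Qed.

(* If [u] did not converge weakly to its cluster point [y], some [<u n, z>]
   would stay [eps]-away from [<y, z>] along a subsequence, whose own weak
   cluster point would then differ from [y]. *)
Lemma weakly_converges_of_unique_cluster_point (u : nat -> X) (B : R) :
  (forall n, hnorm (u n) <= B) ->
  (forall y1 y2, weak_cluster_point u y1 -> weak_cluster_point u y2 -> y1 = y2) ->
  exists y, weak_cluster_point u y /\ weakly_converges u y.
Proof.
  intros HB Hunique.
  destruct (weak_compact u B HB) as [f [y [Hf Hy]]].
  assert (Cy : weak_cluster_point u y) by (exists f; split; assumption).
  exists y. split; [exact Cy |].
  intro z. apply NNPP. intro Hncv.
  apply not_all_ex_not in Hncv as [eps Heps].
  apply imply_to_and in Heps as [Heps Hfar].
  destruct (strict_incr_extract (fun _ n => ~ Rdist (ip (u n) z) (ip y z) < eps))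
    as [psi [Hpsi Ppsi]].
  { intros _ N0. apply not_ex_all_not with (n := N0) in Hfar.
    apply not_all_ex_not in Hfar as [n Hn]. apply imply_to_and in Hn. eauto. }
  destruct (weak_compact (fun n => u (psi n)) B (fun n => HB (psi n)))
    as [g [y' [Hg Hy']]].
  assert (Cy' : weak_cluster_point u y')
    by (apply (weak_cluster_point_subseq u psi); [| exists g; split]; assumption).
  rewrite <- (Hunique y y' Cy Cy') in Hy'.
  destruct (Hy' z eps Heps) as [N0 HN0].
  apply (Ppsi (g N0)). apply HN0. lia.
Qed.

End ClusterPoints.

Section Fejer.
Context {X : HilbertSpace}.
Local Notation ip := (hinner X).
Local Notation sq x := (hinner X x x).

Variables (x : nat -> X) (C : X -> Prop).
Hypothesis x_fejer : fejer_monotone x C.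

Lemma fejer_monotone_dist_le (c : X) : C c ->
  forall n, hnorm (hsub (x n) c) <= hnorm (hsub (x 0%nat) c).
Proof.
  intros Cc n. induction n as [| n IHn]; [lra |].
  eapply Rle_trans; [apply x_fejer |]; assumption.
Qed.

Lemma fejer_monotone_sq_dist_cv (c : X) : C c ->
  exists l, Un_cv (fun n => sq (hsub (x n) c)) l.
Proof.
  intro Cc. destruct (decreasing_cv (fun n => sq (hsub (x n) c))) as [l Hl].
  - intro n. apply hnorm_le, x_fejer, Cc.
  - exists 0. intros r [n ->]. unfold opp_seq. pose proof (hinner_pos X (hsub (x n) c)). lra.
  - exists l. exact Hl.
Qed.

Lemma fejer_monotone_hinner_cv (c1 c2 : X) : C c1 -> C c2 ->
  exists L, Un_cv (fun n => ip (x n) (hsub c1 c2)) L.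
Proof.
  intros C1 C2.
  destruct (fejer_monotone_sq_dist_cv c1 C1) as [l1 H1].
  destruct (fejer_monotone_sq_dist_cv c2 C2) as [l2 H2].
  exists (/ 2 * (l2 - l1 + (sq c1 - sq c2))).
  apply Un_cv_ext with
    (fun n => / 2 * (sq (hsub (x n) c2) - sq (hsub (x n) c1) + (sq c1 - sq c2))).
  - intro n. hinner_expand. rewrite (hinner_sym X c1 (x n)), (hinner_sym X c2 (x n)). field.
  - apply CV_mult; [apply Un_cv_const |].
    apply CV_plus; [apply CV_minus; assumption | apply Un_cv_const].
Qed.

End Fejer.

Theorem lemma2p1 (X : HilbertSpace) (A C : X -> Prop) (x : nat -> X) :
  hclosed A -> linear_subspace A ->
  (exists c, C c) -> hclosed C -> hconvex C ->
  (forall c, C c -> A c) ->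
  fejer_monotone x C ->
  (forall y, weak_cluster_point (fun n => proj A (x n)) y -> C y) ->
  exists y, C y /\ weakly_converges (fun n => proj A (x n)) y.
Proof.
  intros A_closed A_subspace [c0 Cc0] _ _ CA x_fejer Hcluster.
  set (p n := proj A (x n)).
  assert (p_bounded : forall n, hnorm (p n) <= hnorm (hsub (x 0%nat) c0) + hnorm c0).
  { intro n. eapply Rle_trans; [apply (hnorm_le_add_sub _ c0) |].
    apply Rplus_le_compat_r. eapply Rle_trans; [apply proj_dist_le; auto |].
    apply (fejer_monotone_dist_le x C); assumption. }
  destruct (weakly_converges_of_unique_cluster_point p _ p_bounded) as [y [Hy Hcv]].
  - intros y1 y2 H1 H2. apply (weak_cluster_point_eq p); [assumption | assumption |].
    destruct (fejer_monotone_hinner_cv x C x_fejer y1 y2 (Hcluster y1 H1) (Hcluster y2 H2))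
      as [L HL].
    exists L. apply Un_cv_ext with (fun n => hinner X (x n) (hsub y1 y2)); [| exact HL].
    intro n. symmetry. apply proj_spec; [assumption | assumption |].
    apply linear_subspace_sub; auto.
  - exists y. split; [apply Hcluster |]; assumption.
Qed.
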